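(* Let $G$ be a graph with maximum degree $2$ and let $k\ge2$ be an integer. Then the number of components of $G$ that are paths with at least $k-1$ vertices equals $s(G,P_{k-1})-s(G,P_k)-k\,s(G,C_k)$.
   Context: $P_j$ and $C_j$ denote the path and cycle with $j$ vertices; $s(G,H)$ is the number of vertex subsets $X\subseteq V(G)$ such that $G[X]$ is isomorphic to $H$; by convention $s(G,C_2)=0$. *)

(* A finite simple graph is a symmetric irreflexive
   relation e on a finite vertex type T. *)
From mathcomp Require Import all_boot.
Set Implicit Arguments. Unset Strict Implicit. Unset Printing Implicit Defensive.

Definition deg (T : finType) (e : rel T) (x : T) : nat := #|[set y | e x y]|.

Definition max_degree_eq (T : finType) (e : rel T) (d : nat) : Prop :=
  (forall x, deg e x <= d) /\ (exists x, deg e x = d).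

Definition path_rel (n : nat) : rel 'I_n :=
  fun a b => (a.+1 == b :> nat) || (b.+1 == a :> nat).

(* cycle C_n on 'I_n (meaningful for n >= 3): path edges plus {0, n-1} *)
Definition cycle_rel (n : nat) : rel 'I_n :=
  fun a b => path_rel a b ||
    (((a == 0 :> nat) && (b == n.-1 :> nat)) || ((b == 0 :> nat) && (a == n.-1 :> nat))).

Definition induced_iso (T : finType) (e : rel T) (X : {set T}) (n : nat)
  (H : rel 'I_n) : bool :=
  [exists f : {ffun 'I_n -> T},
     [&& injectiveb f, X == [set f i | i : 'I_n] &
         [forall a : 'I_n, forall b : 'I_n, H a b == e (f a) (f b)]]].

Definition s_count (T : finType) (e : rel T) (n : nat) (H : rel 'I_n) : nat :=
  #|[set X : {set T} | induced_iso e X H]|.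

Definition sP (T : finType) (e : rel T) (j : nat) : nat := s_count e (@path_rel j).

(* s(G, C_j), with the convention s(G, C_2) = 0 (and C_j undefined for j < 3) *)
Definition sC (T : finType) (e : rel T) (j : nat) : nat :=
  if j <= 2 then 0 else s_count e (@cycle_rel j).

Definition components (T : finType) (e : rel T) : {set {set T}} :=
  [set [set y | connect e x y] | x : T].

Definition n_path_comps (T : finType) (e : rel T) (m : nat) : nat :=
  #|[set C in components e | (m <= #|C|) && induced_iso e C (@path_rel #|C|)]|.

From mathcomp Require Import all_boot all_algebra zify ring.
Set Implicit Arguments. Unset Strict Implicit. Unset Printing Implicit Defensive.

(* Count induced embeddings (labelled induced copies) instead of vertex sets:
   a set X with G[X] isomorphic to H carries exactly |Aut H| embeddings, and
   |Aut P_1| = 1, |Aut P_j| = 2 (j >= 2), |Aut C_j| = 2j.  Let f range over the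
   embeddings of P_(k-1) and sum deg f(last).  A neighbour y of the last
   vertex is either the previous path vertex or a new vertex; a new y can only
   be adjacent to the two ends of the path (interior vertices have no spare
   degree), so appending it yields an embedding of P_k or, when y ~ f(0), of
   C_k.  Hence  sum_f (2 - deg f(last)) = 2 s(P_(k-1)) - 2 s(P_k) - 2k s(C_k).
   Conversely, a vertex w of degree at most 1 ends an embedding of P_(k-1) iff
   its component is a path with at least k - 1 vertices, and then the embedding
   is unique; since sum (2 - deg) over a path component is 2, the same sum is
   twice the number of such components. *)

Section MaxDegree.
Variables (T : finType) (e : rel T).

Lemma deg_le1_nbr_uniq v a b : deg e v <= 1 -> e v a -> e v b -> a = b.
Proof.
move=> dv ea eb; apply/eqP; apply: contraTT dv => neq_ab; rewrite -ltnNge.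
have <- : #|[set a; b]| = 2 by rewrite cards2 neq_ab.
apply: subset_leq_card; apply/subsetP => y.
by rewrite !inE => /orP[] /eqP->.
Qed.

Lemma deg_le2_nbr v a b c : deg e v <= 2 -> e v a -> e v b -> e v c -> a != b ->
  (c == a) || (c == b).
Proof.
move=> dv ea eb ec neq_ab; apply: contraTT dv; rewrite negb_or -ltnNge => /andP[ca cb].
have -> : 3 = #|c |: [set a; b]| by rewrite cardsU1 cards2 !inE negb_or ca cb neq_ab.
apply: subset_leq_card; apply/subsetP => y.
by rewrite !inE => /or3P[] /eqP->.
Qed.

Lemma card_arcs : #|[set p : T * T | e p.1 p.2]| = \sum_x deg e x.
Proof.
rewrite /deg; under eq_bigr => x _ do rewrite -sum1dep_card.
by rewrite pair_big_dep sum1dep_card.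
Qed.

End MaxDegree.

(** * Induced embeddings *)

Definition image_set (T : finType) n (f : {ffun 'I_n -> T}) : {set T} := [set f i | i : 'I_n].

Lemma image_set_f (T : finType) n (f : {ffun 'I_n -> T}) i : f i \in image_set f.
Proof. exact: imset_f. Qed.

Definition induced_emb (T : finType) (e : rel T) n (H : rel 'I_n) (f : {ffun 'I_n -> T}) :=
  injectiveb f && [forall a, forall b, H a b == e (f a) (f b)].

Definition induced_embs (T : finType) (e : rel T) n (H : rel 'I_n) :=
  [set f | induced_emb e H f].

Definition ffcomp (T : finType) m n (f : {ffun 'I_n -> T}) (s : {ffun 'I_m -> 'I_n}) :
  {ffun 'I_m -> T} := [ffun i => f (s i)].

Lemma induced_embP (T : finType) (e : rel T) n (H : rel 'I_n) (f : {ffun 'I_n -> T}) :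
  reflect (injective f /\ forall a b, H a b = e (f a) (f b)) (induced_emb e H f).
Proof.
apply: (iffP andP) => [[/injectiveP inj_f /'forall_'forall_eqP]|[inj_f Hf]] //.
by split; [apply/injectiveP | apply/'forall_'forall_eqP].
Qed.

Arguments induced_embP {T e n H f}.

Lemma eq_induced_emb (T : finType) (e : rel T) m (H H' : rel 'I_m) f :
  H =2 H' -> induced_emb e H f = induced_emb e H' f.
Proof.
by move=> eqH; rewrite /induced_emb; under eq_forallb do under eq_forallb do rewrite eqH.
Qed.

Section InducedEmbeddings.
Variables (T : finType) (e : rel T).

Lemma induced_isoE (X : {set T}) n (H : rel 'I_n) :
  induced_iso e X H = [exists f, induced_emb e H f && (X == image_set f)].
Proof.
by apply: eq_existsb => f; rewrite /induced_emb; case: injectiveb => //=; exact: andbC.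
Qed.

Lemma card_image_set n (f : {ffun 'I_n -> T}) : injective f -> #|image_set f| = n.
Proof. by move=> inj_f; rewrite card_imset // card_ord. Qed.

Lemma induced_emb_comp m n (H' : rel 'I_m) (H : rel 'I_n)
    (s : {ffun 'I_m -> 'I_n}) (f : {ffun 'I_n -> T}) :
  induced_emb H H' s -> induced_emb e H f -> induced_emb e H' (ffcomp f s).
Proof.
move=> /induced_embP[inj_s Hs] /induced_embP[inj_f Hf].
apply/induced_embP; split=> [a b|a b]; rewrite !ffunE; last by rewrite Hs Hf.
by move/inj_f/inj_s.
Qed.

Lemma induced_embs_same_image n (H : rel 'I_n) (f0 : {ffun 'I_n -> T}) : induced_emb e H f0 ->
  [set g in induced_embs e H | image_set g == image_set f0] =
  [set ffcomp f0 s | s in induced_embs H H].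
Proof.
move=> emb_f0; have /induced_embP[inj_f0 Hf0] := emb_f0.
apply/setP => g; rewrite !inE; apply/andP/imsetP => [[emb_g /eqP img_g]|[s]].
  have /induced_embP[inj_g Hg] := emb_g.
  have pre i : exists j, f0 j = g i.
    have : g i \in image_set f0 by rewrite -img_g imset_f.
    by case/imsetP => j _ ->; exists j.
  pose s := [ffun i => odflt i [pick j | f0 j == g i]].
  have f0s i : f0 (s i) = g i.
    rewrite ffunE; case: pickP => [j /eqP //|none].
    by case: (pre i) => j /eqP; rewrite none.
  exists s; last by apply/ffunP => i; rewrite ffunE f0s.
  rewrite inE; apply/induced_embP; split=> [a b sab|a b].
    by apply: inj_g; rewrite -!f0s sab.
  by rewrite Hg Hf0 !f0s.
rewrite inE => emb_s ->; have emb_g := induced_emb_comp emb_s emb_f0.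
have /induced_embP[inj_g _] := emb_g.
split=> //; rewrite eqEcard !card_image_set // leqnn andbT.
by apply/subsetP => _ /imsetP[i _ ->]; rewrite ffunE imset_f.
Qed.

Lemma card_induced_embs n (H : rel 'I_n) :
  #|induced_embs e H| = s_count e H * #|induced_embs H H|.
Proof.
have -> : s_count e H = #|@image_set T n @: induced_embs e H|.
  apply: eq_card => X; rewrite inE induced_isoE; apply/existsP/imsetP.
    by case=> f /andP[emb_f /eqP->]; exists f; rewrite ?inE.
  by case=> f; rewrite inE => emb_f ->; exists f; rewrite emb_f eqxx.
rewrite -sum1_card (partition_big_imset (@image_set T n)) -sum_nat_const /=.
apply: eq_bigr => X /imsetP[f0]; rewrite inE => emb_f0 ->.
have /induced_embP[inj_f0 _] := emb_f0.
rewrite sum1dep_card (induced_embs_same_image emb_f0) card_imset //.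
move=> s1 s2 /ffunP eq_s; apply/ffunP => i.
by apply: inj_f0; have := eq_s i; rewrite !ffunE.
Qed.

End InducedEmbeddings.

Lemma deg_closed_induced_emb (T : finType) (e : rel T) m (H : rel 'I_m) g :
  induced_emb e H g -> (forall i y, e (g i) y -> y \in image_set g) ->
  forall i, deg e (g i) = deg H i.
Proof.
move=> /induced_embP[inj_g Hg] closed_g i; rewrite /deg -(card_imset _ inj_g).
apply: eq_card => y; rewrite !inE; apply/idP/imsetP => [giy|[j]]; last by rewrite inE Hg => ? ->.
by case/imsetP: (closed_g _ _ giy) => j _ yj; exists j; rewrite // inE Hg -yj.
Qed.

Lemma deg_aut m (H : rel 'I_m) s x : induced_emb H H s -> deg H (s x) = deg H x.
Proof.
move=> /induced_embP[inj_s Hs]; have [s' _ s'K] := injF_bij inj_s.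
rewrite /deg -[RHS](card_imset _ inj_s); apply: eq_card => y; rewrite !inE.
apply/idP/imsetP => [Hsy|[z]]; last by rewrite inE Hs => Hz ->.
by exists (s' y); rewrite ?s'K // inE Hs s'K.
Qed.

(** * Paths and cycles *)

Lemma card_ord_val m t : #|[set j : 'I_m | j == t :> nat]| = (t < m).
Proof.
case: ltnP => [lt_tm|le_mt].
  rewrite /= -(cards1 (Ordinal lt_tm)).
  by apply: eq_card => j; rewrite !inE -val_eqE.
apply/eqP; rewrite cards_eq0; apply/eqP/setP => j; rewrite !inE.
by apply/negbTE/eqP => jt; move: (ltn_ord j); rewrite jt ltnNge le_mt.
Qed.

Lemma deg_path_rel m (i : 'I_m) : deg (@path_rel m) i = (0 < i) + (i.+1 < m).
Proof.
rewrite /deg; have -> : [set j | path_rel i j] =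
    [set j : 'I_m | (j == i.-1 :> nat) && (0 < i)] :|: [set j : 'I_m | j == i.+1 :> nat].
  by apply/setP => j; rewrite !inE /path_rel; lia.
rewrite cardsU card_ord_val.
have -> : [set j : 'I_m | (j == i.-1 :> nat) && (0 < i)] :&: [set j : 'I_m | j == i.+1 :> nat]
    = set0 by apply/setP => j; rewrite !inE; lia.
rewrite cards0 subn0; congr (_ + _).
case: (posnP i) => [i0|i_gt0].
  by apply/eqP; rewrite cards_eq0; apply/eqP/setP => j; rewrite !inE i0 andbF.
transitivity #|[set j : 'I_m | j == i.-1 :> nat]|.
  by apply: eq_card => j; rewrite !inE andbT.
by rewrite (card_ord_val m i.-1); have := ltn_ord i; lia.
Qed.

Lemma deg_path_rel_le2 m (i : 'I_m) : deg (@path_rel m) i <= 2.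
Proof. by rewrite deg_path_rel; case: (0 < i); case: (i.+1 < m). Qed.

Lemma sum_path_rel_deficit m : \sum_(i < m.+1) (2 - deg (@path_rel m.+1) i) = 2.
Proof.
case: m => [|m]; first by rewrite big_ord1 deg_path_rel.
rewrite big_ord_recl big_ord_recr big1 => [|i _]; rewrite !deg_path_rel /= /bump /= add1n.
  by rewrite ltnn.
by rewrite !ltnS ltn_ord.
Qed.

Lemma aut_path_rev m : induced_emb (@path_rel m) (@path_rel m) [ffun i => rev_ord i].
Proof.
apply/induced_embP; split=> [a b|a b]; rewrite !ffunE; first exact: rev_ord_inj.
by rewrite /path_rel /=; have := ltn_ord a; have := ltn_ord b; lia.
Qed.

Lemma widen_path_emb n m (le_nm : n <= m) :
  induced_emb (@path_rel m) (@path_rel n) [ffun i => widen_ord le_nm i].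
Proof.
by apply/induced_embP; split=> [a b|a b]; rewrite !ffunE // => /(congr1 val) /= /val_inj.
Qed.

Lemma cycle_rel2 m : m = 2 -> @cycle_rel m =2 @path_rel m.
Proof.
by move=> m2 a b; rewrite /cycle_rel /path_rel; have := ltn_ord a; have := ltn_ord b; lia.
Qed.

Lemma induced_emb_eq_init (T : finType) (e : rel T) m (H : rel 'I_m)
    (f g : {ffun 'I_m -> T}) :
  (forall x, deg e x <= 2) -> subrel (@path_rel m) H ->
  induced_emb e H f -> induced_emb e H g ->
  (forall i : 'I_m, i <= 1 -> f i = g i) -> f = g.
Proof.
move=> deg2 pathH /induced_embP[inj_f Hf] /induced_embP[inj_g Hg] fg01.
suff fg t (i : 'I_m) : i <= t -> f i = g i by apply/ffunP => i; apply: (fg i).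
elim: t i => [|t IH] i le_it; first by apply: fg01; lia.
have [|lt_ti] := leqP i t; first exact: IH.
have [t0|t_gt0] := posnP t; first by apply: fg01; lia.
have lt_tm : t < m by have := ltn_ord i; lia.
pose p := Ordinal lt_tm; pose q := Ordinal (leq_ltn_trans (leq_pred t) lt_tm).
have pi : path_rel p i by rewrite /path_rel /=; lia.
have pq : path_rel p q by rewrite /path_rel /=; lia.
have fpq : f p = g p /\ f q = g q by split; apply: IH => /=; lia.
have f_pi : e (f p) (f i) by rewrite -Hf; apply: pathH.
have f_pq : e (f p) (f q) by rewrite -Hf; apply: pathH.
have g_pi : e (f p) (g i) by rewrite fpq.1 -Hg; apply: pathH.
have fq_fi : f q != f i by apply: contraTneq isT => /inj_f/(congr1 val) /=; lia.
case/orP: (deg_le2_nbr (deg2 _) f_pq f_pi g_pi fq_fi) => /eqP // gi_fq.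
by have := inj_g _ _ (etrans gi_fq fpq.2) => /(congr1 val) /=; lia.
Qed.

Lemma induced_emb_eq_endpoint (T : finType) (e : rel T) m (H : rel 'I_m.+1)
    (f g : {ffun 'I_m.+1 -> T}) :
  (forall x, deg e x <= 2) -> subrel (@path_rel _) H ->
  induced_emb e H f -> induced_emb e H g ->
  deg e (f ord0) <= 1 -> f ord0 = g ord0 -> f = g.
Proof.
move=> deg2 pathH emb_f emb_g end_f fg0.
apply: (induced_emb_eq_init deg2 pathH emb_f emb_g) => i le_i1.
have [i0|i_gt0] := posnP i; first by rewrite (_ : i = ord0) //; exact: val_inj.
have [[_ Hf] [_ Hg]] := (induced_embP emb_f, induced_embP emb_g).
have edge0 : path_rel ord0 i by rewrite /path_rel /=; lia.
by apply: (deg_le1_nbr_uniq end_f); [rewrite -Hf | rewrite fg0 -Hg]; apply: pathH.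
Qed.

Lemma card_aut_path1 : #|induced_embs (@path_rel 1) (@path_rel 1)| = 1.
Proof.
suff -> : induced_embs (@path_rel 1) (@path_rel 1) = setT.
  by rewrite cardsT card_ffun !card_ord.
apply/setP => s; rewrite !inE; apply/induced_embP.
by split=> [a b _|a b]; rewrite (ord1 a) (ord1 b) // (ord1 (s ord0)).
Qed.

Lemma card_aut_path n : #|induced_embs (@path_rel n.+2) (@path_rel n.+2)| = 2.
Proof.
pose id_s := [ffun i : 'I_n.+2 => i]; pose rev_s := [ffun i : 'I_n.+2 => rev_ord i].
have aut_id : induced_emb (@path_rel _) (@path_rel _) id_s.
  by apply/induced_embP; split=> [a b|a b]; rewrite !ffunE.
have aut_rev := aut_path_rev n.+2.
have eq_aut (s t : {ffun 'I_n.+2 -> 'I_n.+2}) :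
    induced_emb (@path_rel _) (@path_rel _) s -> induced_emb (@path_rel _) (@path_rel _) t ->
    s ord0 = t ord0 -> s = t.
  move=> aut_s aut_t; apply: (induced_emb_eq_endpoint (@deg_path_rel_le2 _) _ aut_s aut_t) => //.
  by rewrite deg_aut // deg_path_rel.
suff -> : induced_embs (@path_rel _) (@path_rel _) = [set id_s; rev_s].
  suff neq_id_rev : id_s != rev_s by rewrite cards2 neq_id_rev.
  by apply/eqP => /ffunP/(_ ord0); rewrite !ffunE => /(congr1 val).
apply/setP => s; rewrite !inE; apply/idP/orP => [aut_s|[]/eqP-> //].
have := deg_aut ord0 aut_s; rewrite !deg_path_rel /= => deg_s0.
have [s0|s0] : s ord0 = 0 :> nat \/ s ord0 = n.+1 :> nat.
  move: deg_s0 (ltn_ord (s ord0)); case: posnP => [|_]; first by left.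
  by case: ltnP => //= ? _ ?; right; lia.
- by left; apply/eqP/eq_aut => //; rewrite ffunE; apply: val_inj.
- by right; apply/eqP/eq_aut => //; rewrite ffunE; apply: val_inj; rewrite /= s0; lia.
Qed.

Import GRing.Theory.

(* Viewed as the ring Z/(n+3), ['I_n.+3] carries C_(n+3) as the Cayley graph of {1, -1}. *)
Section CycleGraph.
Local Open Scope ring_scope.
Variable n : nat.

Lemma val_add1 (a : 'I_n.+3) : val (a + 1) = if a == n.+2 :> nat then 0%N else a.+1.
Proof.
rewrite /= [(1 %% _)%N]modn_small // addn1; case: eqP => [->|ne_a]; first exact: modnn.
by rewrite modn_small //; have := ltn_ord a; lia.
Qed.

Lemma cycle_relE (a b : 'I_n.+3) : cycle_rel a b = (b == a + 1) || (a == b + 1).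
Proof.
rewrite /cycle_rel /path_rel -!val_eqE !val_add1 /=.
have := ltn_ord a; have := ltn_ord b; do 2 case: ifP; lia.
Qed.

Lemma deg_cycle_rel (a : 'I_n.+3) : deg (@cycle_rel n.+3) a = 2%N.
Proof.
rewrite /deg; have -> : [set b | cycle_rel a b] = [set a + 1; a - 1].
  by apply/setP => b; rewrite !inE cycle_relE [b == a - 1]eq_sym subr_eq.
rewrite cards2 (inj_eq (addrI a)) -val_eqE /= [(1 %% _)%N]modn_small //.
by rewrite modn_small.
Qed.

Lemma aut_cycle_rot (c : 'I_n.+3) :
  induced_emb (@cycle_rel _) (@cycle_rel _) [ffun x => x + c].
Proof.
apply/induced_embP; split=> [x y|x y]; rewrite !ffunE; first exact: addIr.
by rewrite !cycle_relE addrAC (inj_eq (addIr c)) [y + c + 1]addrAC (inj_eq (addIr c)).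
Qed.

Lemma aut_cycle_refl (c : 'I_n.+3) :
  induced_emb (@cycle_rel _) (@cycle_rel _) [ffun x => c - x].
Proof.
apply/induced_embP; split=> [x y|x y]; rewrite !ffunE; first by move/addrI/oppr_inj.
have refl_step a b : (c - b == c - a + 1) = (a == b + 1).
  by rewrite -subr_eq0 -[RHS]subr_eq0; congr (_ == 0); ring.
by rewrite !cycle_relE !refl_step orbC.
Qed.

(* An automorphism is determined by the arc [(s 0, s 1)], and every arc is realised by a
   rotation or a reflection. *)
Lemma card_aut_cycle : #|induced_embs (@cycle_rel n.+3) (@cycle_rel n.+3)| = (2 * n.+3)%N.
Proof.
pose phi (s : {ffun 'I_n.+3 -> 'I_n.+3}) := (s 0, s 1).
have phi_inj : {in induced_embs (@cycle_rel _) (@cycle_rel _) &, injective phi}.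
  move=> s t; rewrite !inE => aut_s aut_t [s0 s1].
  apply: (induced_emb_eq_init _ _ aut_s aut_t) => [x|x y|i le_i1].
  - by rewrite deg_cycle_rel.
  - by rewrite /cycle_rel => ->.
  have [->|->] // : i = 0 \/ i = 1.
    by have [i0|i_gt0] := posnP i; [left|right]; apply: val_inj; rewrite /= ?modn_small //; lia.
rewrite -(card_in_imset phi_inj).
have -> : phi @: induced_embs (@cycle_rel _) (@cycle_rel _) = [set p | cycle_rel p.1 p.2].
  apply/setP => -[a b]; rewrite inE /=; apply/imsetP/idP => [[s]|].
    by rewrite inE => /induced_embP[_ Hs] [-> ->]; rewrite -Hs cycle_relE add0r eqxx.
  rewrite cycle_relE => /orP[]/eqP->.
    by exists [ffun x => x + a]; rewrite ?inE ?aut_cycle_rot // /phi !ffunE add0r addrC.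
  by exists [ffun x => b + 1 - x]; rewrite ?inE ?aut_cycle_refl // /phi !ffunE subr0 addrK.
rewrite card_arcs (eq_bigr _ (fun x _ => deg_cycle_rel x)).
by rewrite sum_nat_const card_ord mulnC.
Qed.

End CycleGraph.

(** * Appending a vertex to an induced path *)

Definition extend (T : finType) n (f : {ffun 'I_n.+1 -> T}) (y : T) : {ffun 'I_n.+2 -> T} :=
  [ffun i => if unlift ord_max i is Some j then f j else y].

Lemma extend_lift (T : finType) n (f : {ffun 'I_n.+1 -> T}) y i :
  extend f y (lift ord_max i) = f i.
Proof. by rewrite ffunE liftK. Qed.

Lemma extend_max (T : finType) n (f : {ffun 'I_n.+1 -> T}) y : extend f y ord_max = y.
Proof. by rewrite ffunE unlift_none. Qed.

Lemma extend_ord0 (T : finType) n (f : {ffun 'I_n.+1 -> T}) y : extend f y ord0 = f ord0.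
Proof. by rewrite -(extend_lift f y); congr (extend f y _); apply: val_inj. Qed.

Section PathExtensions.
Variables (T : finType) (e : rel T).
Hypotheses (e_sym : symmetric e) (e_irr : irreflexive e) (deg2 : forall x, deg e x <= 2).

Definition path_extensions n := [set p : {ffun 'I_n.+1 -> T} * T |
  [&& induced_emb e (@path_rel _) p.1, p.2 \notin image_set p.1 & e (p.1 ord_max) p.2]].

Lemma path_emb_new_nbr n (f : {ffun 'I_n.+1 -> T}) i y :
  induced_emb e (@path_rel _) f -> y \notin image_set f -> e (f i) y ->
  (i == 0 :> nat) || (i == n :> nat).
Proof.
(* An interior vertex already has its two path neighbours. *)
move=> /induced_embP[inj_f Hf] y_new fiy; apply: contraTT isT.
rewrite negb_or => /andP[i_gt0 i_ltn].
have lt_i1 : i.-1 < n.+1 by have := ltn_ord i; lia.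
have lt_i2 : i.+1 < n.+1 by have := ltn_ord i; lia.
pose a := Ordinal lt_i1; pose b := Ordinal lt_i2.
have fia : e (f i) (f a) by rewrite -Hf /path_rel /=; lia.
have fib : e (f i) (f b) by rewrite -Hf /path_rel /=; lia.
have fab : f a != f b by apply: contraTneq isT => /inj_f/(congr1 val) /=; lia.
case/orP: (deg_le2_nbr (deg2 _) fia fib fiy fab) => /eqP y_old.
all: by rewrite y_old image_set_f in y_new.
Qed.

Lemma card_path_extensions n :
  #|path_extensions n| = \sum_(f in induced_embs e (@path_rel n.+1))
                            #|[set y | (y \notin image_set f) && e (f ord_max) y]|.
Proof.
under eq_bigr do rewrite -sum1dep_card.
by rewrite pair_big_dep /= sum1dep_card; apply: eq_card => p; rewrite !inE.
Qed.

Lemma deg_path_emb_max n (f : {ffun 'I_n.+1 -> T}) :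
  induced_emb e (@path_rel _) f ->
  deg e (f ord_max) = #|[set y | (y \notin image_set f) && e (f ord_max) y]| + (0 < n).
Proof.
move=> emb_f; have /induced_embP[inj_f Hf] := emb_f.
have -> : (0 < n : nat) = deg (@path_rel n.+1) ord_max by rewrite deg_path_rel ltnn addn0.
rewrite /deg; set N := [set y | _ && _].
have -> : [set y | e (f ord_max) y] = N :|: f @: [set i | path_rel ord_max i].
  apply/setP => y; rewrite !inE; case: (boolP (y \in image_set f)) => /= [|y_new].
    by case/imsetP => i _ ->; rewrite (mem_imset _ _ inj_f) inE Hf.
  suff /negbTE-> : y \notin f @: [set i | path_rel ord_max i] by rewrite orbF.
  by apply: contra y_new => /imsetP[i _ ->]; rewrite imset_f.
rewrite (cardsU N) card_imset // -[RHS]subn0; congr (_ - _); apply/eqP; rewrite cards_eq0.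
apply/eqP/setP => y; rewrite !inE.
by apply/negP => /andP[/andP[y_new _] /imsetP[i _ yi]]; rewrite yi imset_f in y_new.
Qed.

Lemma path_extension_nbr n (f : {ffun 'I_n.+1 -> T}) y (j : 'I_n.+1) :
  (f, y) \in path_extensions n ->
  e y (f j) = (j == n :> nat) || (j == 0 :> nat) && e (f ord0) y.
Proof.
rewrite inE /= => /and3P[emb_f y_new fy].
have [jn|j_ne_n] := eqVneq (j : nat) n.
  by rewrite e_sym (_ : j = ord_max) //; apply: val_inj.
have [j0|j_ne0] := eqVneq (j : nat) 0.
  by rewrite e_sym (_ : j = ord0) //; apply: val_inj.
apply/negP => fjy; rewrite e_sym in fjy.
by have := path_emb_new_nbr emb_f y_new fjy; rewrite (negbTE j_ne0) (negbTE j_ne_n).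
Qed.

Lemma extend_induced_emb n (f : {ffun 'I_n.+1 -> T}) y :
  (f, y) \in path_extensions n ->
  induced_emb e (if e (f ord0) y then @cycle_rel n.+2 else @path_rel n.+2) (extend f y).
Proof.
move=> ext_fy; have nbr j := path_extension_nbr j ext_fy.
move: ext_fy; rewrite inE => /and3P[/induced_embP[inj_f Hf] y_new _] /=.
move: (e (f ord0) y) nbr => c nbr; apply/induced_embP; split=> [a b|a b].
  case: (unliftP ord_max a) => [i ->|->]; case: (unliftP ord_max b) => [j ->|->] //;
    rewrite ?extend_lift ?extend_max; first by move/inj_f->.
    by move=> fi_y; rewrite -fi_y image_set_f in y_new.
  by move=> y_fj; rewrite y_fj image_set_f in y_new.
case: (unliftP ord_max a) => [i ->|->]; case: (unliftP ord_max b) => [j ->|->];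
  rewrite ?extend_lift ?extend_max.
- rewrite -Hf; have := ltn_ord i; have := ltn_ord j.
  by case: c {nbr}; rewrite /cycle_rel /path_rel !lift_max /=; lia.
- rewrite e_sym nbr; have := ltn_ord i.
  by case: c {nbr}; rewrite /cycle_rel /path_rel lift_max /=; lia.
- rewrite nbr; have := ltn_ord j.
  by case: c {nbr}; rewrite /cycle_rel /path_rel lift_max /=; lia.
- by rewrite e_irr; case: c {nbr}; rewrite /cycle_rel /path_rel /=; lia.
Qed.

Lemma extend_inj n : injective (fun p : {ffun 'I_n.+1 -> T} * T => extend p.1 p.2).
Proof.
move=> [f y] [f' y'] /= eq_ext; have := extend_max f y; rewrite eq_ext extend_max => ->.
by congr pair; apply/ffunP => i; rewrite -(extend_lift f y) eq_ext extend_lift.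
Qed.

Lemma extend_path_extensions n :
  [set extend p.1 p.2 | p in path_extensions n] =
  [set g : {ffun 'I_n.+2 -> T} |
    induced_emb e (if e (g ord0) (g ord_max) then @cycle_rel _ else @path_rel _) g].
Proof.
apply/setP => g; rewrite inE; apply/imsetP/idP => [[[f y] ext_fy ->]|emb_g].
  by rewrite extend_ord0 extend_max; apply: extend_induced_emb.
pose f := [ffun i => g (lift ord_max i)].
have ext_g : extend f (g ord_max) = g.
  apply/ffunP => a; case: (unliftP ord_max a) => [i ->|->]; last exact: extend_max.
  by rewrite extend_lift ffunE.
exists (f, g ord_max) => //; rewrite inE /=.
have [inj_g Hg] := induced_embP emb_g.
have Hlift (i j : 'I_n.+1) : path_rel i j = e (f i) (f j).
  by rewrite !ffunE -Hg; case: ifP => _; rewrite /cycle_rel /path_rel !lift_max /=;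
    have := ltn_ord i; have := ltn_ord j; lia.
apply/and3P; split.
- by apply/induced_embP; split=> // i j; rewrite !ffunE => /inj_g/lift_inj.
- apply/imsetP => -[i _]; rewrite ffunE => /inj_g/(congr1 (@nat_of_ord _)).
  by rewrite lift_max /=; have := ltn_ord i; lia.
- by rewrite ffunE -Hg; case: ifP => _; rewrite /cycle_rel /path_rel lift_max /=; lia.
Qed.

(* On two vertices the closing edge is the path edge itself, hence the convention
   s(G, C_2) = 0. *)
Lemma card_path_extensions0 : #|path_extensions 0| = #|induced_embs e (@path_rel 2)|.
Proof.
rewrite -(card_imset _ (@extend_inj 0)) extend_path_extensions; apply: eq_card => g.
by rewrite !inE; case: ifP; rewrite ?(eq_induced_emb _ _ (cycle_rel2 erefl)).
Qed.

Lemma card_path_extensionsS n : #|path_extensions n.+1| =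
  #|induced_embs e (@path_rel n.+3)| + #|induced_embs e (@cycle_rel n.+3)|.
Proof.
have closing_edge (H : rel 'I_n.+3) g :
    induced_emb e H g -> e (g ord0) (g ord_max) = H ord0 ord_max.
  by case/induced_embP => _ Hg; rewrite Hg.
rewrite -(card_imset _ (@extend_inj n.+1)) extend_path_extensions -cardsUI.
have -> : induced_embs e (@path_rel n.+3) :&: induced_embs e (@cycle_rel n.+3) = set0.
  apply/setP => g; rewrite !inE; apply/negP => /andP[/closing_edge emb_P /closing_edge].
  by rewrite emb_P /cycle_rel /path_rel /=; lia.
rewrite cards0 addn0; apply: eq_card => g; rewrite !inE.
case: ifP => closing.
  case: (boolP (induced_emb e (@path_rel _) g)) => // /closing_edge.
  by rewrite closing /path_rel /=; lia.
case: (boolP (induced_emb e (@cycle_rel _) g)) => [/closing_edge|]; rewrite ?orbF //.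
by rewrite closing /cycle_rel /path_rel /=; lia.
Qed.

Lemma sum_deg_path_emb_max n :
  \sum_(f in induced_embs e (@path_rel n.+1)) deg e (f ord_max) =
  #|path_extensions n| + #|induced_embs e (@path_rel n.+1)| * (0 < n).
Proof.
rewrite card_path_extensions -sum_nat_const -big_split /=.
by apply: eq_bigr => f; rewrite inE => /deg_path_emb_max.
Qed.

End PathExtensions.

(** * Path components *)

Definition component (T : finType) (e : rel T) v : {set T} := [set y | connect e v y].

Definition path_components (T : finType) (e : rel T) m : {set {set T}} :=
  [set C in components e | (m <= #|C|) && induced_iso e C (@path_rel #|C|)].

Lemma sum_path_embs_rev (T : finType) (e : rel T) n (F : T -> nat) :
  \sum_(f in induced_embs e (@path_rel n.+1)) F (f ord_max) =
  \sum_(f in induced_embs e (@path_rel n.+1)) F (f ord0).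
Proof.
pose rev (f : {ffun 'I_n.+1 -> T}) := ffcomp f [ffun i => rev_ord i].
have revK : involutive rev by move=> f; apply/ffunP => i; rewrite !ffunE rev_ordK.
have emb_rev f : induced_emb e (@path_rel _) f -> induced_emb e (@path_rel _) (rev f).
  exact: induced_emb_comp (aut_path_rev _).
rewrite (reindex_inj (inv_inj revK)); apply: eq_big => [f|f _].
  by rewrite !inE; apply/idP/idP => [/emb_rev|/emb_rev]; rewrite ?revK.
by rewrite !ffunE; congr (F (f _)); apply: val_inj; rewrite /= subnn.
Qed.

Section PathComponents.
Variables (T : finType) (e : rel T).
Hypotheses (e_sym : symmetric e) (e_irr : irreflexive e) (deg2 : forall x, deg e x <= 2).

Lemma component_eq v w : (component e w == component e v) = (w \in component e v).
Proof.
apply/eqP/idP => [<-|vw]; first by rewrite inE connect0.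
by apply/setP => y; rewrite inE in vw; rewrite !inE (same_connect (sym_connect_sym e_sym) vw).
Qed.

Lemma component_min (A : {set T}) v :
  v \in A -> (forall x y, x \in A -> e x y -> y \in A) -> component e v \subset A.
Proof.
move=> Av closedA; apply/subsetP => y; rewrite inE => /connectP[p].
elim: p v Av => [|x p IH] v Av /=; first by move=> _ ->.
by case/andP=> vx px y_last; apply: (IH x) => //; apply: closedA vx.
Qed.

Lemma image_set_sub_component m (g : {ffun 'I_m.+1 -> T}) :
  induced_emb e (@path_rel _) g -> image_set g \subset component e (g ord0).
Proof.
move=> /induced_embP[_ Hg]; apply/subsetP => _ /imsetP[i _ ->]; rewrite inE.
suff conn t : t < m.+1 -> connect e (g ord0) (g (inord t)) by rewrite -(inord_val i) conn.
elim: t => [|t IH] lt_t.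
  by rewrite (_ : inord 0 = ord0) ?connect0 //; apply: val_inj; rewrite /= inordK.
apply: connect_trans (IH (ltnW lt_t)) (connect1 _); rewrite -Hg /path_rel !inordK //; lia.
Qed.

Lemma path_from_endpoint w : deg e w <= 1 ->
  exists m (g : {ffun 'I_m.+1 -> T}),
    [/\ induced_emb e (@path_rel _) g, g ord0 = w & image_set g = component e w].
Proof.
(* A longest induced path from [w] is closed under adjacency: it cannot be extended, and
   neither [w] nor an interior vertex has a spare neighbour. *)
move=> end_w.
pose P m := [exists g : {ffun 'I_m.+1 -> T}, induced_emb e (@path_rel _) g && (g ord0 == w)].
have P0 : P 0.
  apply/existsP; exists [ffun => w]; rewrite ffunE eqxx andbT.
  by apply/induced_embP; split=> [a b _|a b]; rewrite (ord1 a) (ord1 b) // !ffunE e_irr.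
have P_bounded m : P m -> m <= #|T|.
  case/existsP => g /andP[/induced_embP[inj_g _] _].
  by have := max_card (image_set g); rewrite card_image_set // => /ltnW.
have [M /existsP[g /andP[emb_g /eqP g0]] M_max] := ex_maxnP (ex_intro P 0 P0) P_bounded.
exists M, g; split=> //; apply/eqP; rewrite eqEsubset -{1}g0 image_set_sub_component //=.
apply: component_min => [|_ y /imsetP[i _ ->] giy]; first by rewrite -g0 image_set_f.
apply: contraT => y_new; have [_ Hg] := induced_embP emb_g.
have w_nbr : 0 < M -> ~~ e w y.
  move=> M_gt0; apply: contra y_new => wy.
  have w1 : e w (g (inord 1)) by rewrite -g0 -Hg /path_rel inordK.
  by rewrite (deg_le1_nbr_uniq end_w wy w1); apply: image_set_f.
have [iM|i_ne_M] := eqVneq (i : nat) M; last first.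
  have i0 : i = ord0.
    case/orP: (path_emb_new_nbr deg2 emb_g y_new giy) => /eqP i_end; first exact: val_inj.
    by rewrite i_end eqxx in i_ne_M.
  have M_gt0 : 0 < M by move: i_ne_M; rewrite i0 /=; lia.
  by rewrite i0 g0 (negbTE (w_nbr M_gt0)) in giy.
have ext_gy : (g, y) \in path_extensions e M.
  by rewrite inE emb_g y_new -(_ : i = ord_max) //; apply: val_inj.
have emb_ext : induced_emb e (@path_rel _) (extend g y).
  have := extend_induced_emb e_sym e_irr deg2 ext_gy; case: ifP => // wy.
  rewrite g0 in wy; have M0 : M = 0 by apply: contraTeq wy => M_ne0; apply: w_nbr; lia.
  by rewrite (eq_induced_emb _ _ (cycle_rel2 _)) // M0.
have := M_max M.+1; rewrite ltnn; apply; apply/existsP.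
by exists (extend g y); rewrite emb_ext extend_ord0 g0 eqxx.
Qed.

Lemma mem_path_components_endpoint w m : deg e w <= 1 ->
  (component e w \in path_components e m) = (m <= #|component e w|).
Proof.
move=> end_w; have [k [g [emb_g _ img]]] := path_from_endpoint end_w.
rewrite inE imset_f //= -img; have [inj_g _] := induced_embP emb_g.
rewrite card_image_set // induced_isoE; apply: andb_idr => _.
by apply/existsP; exists g; rewrite emb_g eqxx.
Qed.

Lemma sum_path_component C : C \in components e -> induced_iso e C (@path_rel #|C|) ->
  \sum_(w in C) (2 - deg e w) = 2.
Proof.
case/imsetP => v _ ->; rewrite -/(component e v).
have v_in : v \in component e v by rewrite inE connect0.
rewrite induced_isoE; move: v_in; move: #|_| => m v_in /existsP[g /andP[emb_g /eqP img]].
have [inj_g _] := induced_embP emb_g.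
have closed_g i y : e (g i) y -> y \in image_set g.
  move=> giy; rewrite -img inE; apply: connect_trans (connect1 giy).
  by have := image_set_f g i; rewrite -img inE.
rewrite img big_imset /=; last by move=> ? ? _ _ /inj_g.
under eq_bigr => i _ do rewrite (deg_closed_induced_emb emb_g closed_g).
have m_gt0 : 0 < m by move: v_in; rewrite img => /imsetP[[i lt_im] _ _]; apply: leq_ltn_trans lt_im.
by case: m {v_in g emb_g inj_g img closed_g} m_gt0 => // m _; apply: sum_path_rel_deficit.
Qed.

Lemma card_path_embs_from w n : deg e w <= 1 ->
  #|[set f in induced_embs e (@path_rel n.+1) | f ord0 == w]| = (n < #|component e w|).
Proof.
move=> end_w; have [m [g [emb_g g0 img]]] := path_from_endpoint end_w.
have [inj_g _] := induced_embP emb_g.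
rewrite -img card_image_set // ltnS; case: leqP => [le_nm|lt_mn].
  pose pre := ffcomp g [ffun i => widen_ord (le_nm : n.+1 <= m.+1) i].
  have emb_pre := induced_emb_comp (widen_path_emb _) emb_g : induced_emb e _ pre.
  have pre0 : pre ord0 = w by rewrite !ffunE -g0; congr (g _); apply: val_inj.
  apply/eqP/cards1P; exists pre; apply/setP => f; rewrite !inE.
  apply/andP/eqP => [[emb_f /eqP f0]|->]; last by rewrite emb_pre pre0.
  by apply: (induced_emb_eq_endpoint deg2 _ emb_f emb_pre); rewrite ?f0 ?pre0.
apply/eqP; rewrite cards_eq0; apply/eqP/setP => f; rewrite !inE.
apply/negP => /andP[emb_f /eqP f0]; have [inj_f _] := induced_embP emb_f.
have := subset_leq_card (image_set_sub_component emb_f).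
by rewrite f0 -img !card_image_set // ltnS leqNgt lt_mn.
Qed.

Lemma sum_path_embs_deficit n :
  \sum_(f in induced_embs e (@path_rel n.+1)) (2 - deg e (f ord_max)) =
  2 * n_path_comps e n.+1.
Proof.
pose Spc := path_components e n.+1.
have fiber w :
    \sum_(f | (f \in induced_embs e (@path_rel n.+1)) && (f ord0 == w)) (2 - deg e (f ord0))
    = if component e w \in Spc then 2 - deg e w else 0.
  rewrite (eq_bigr (fun=> 2 - deg e w)) => [|f /andP[_ /eqP->] //].
  have [end_w|deg_w2] := leqP (deg e w) 1; last first.
    by rewrite (_ : 2 - deg e w = 0) ?sum_nat_const ?muln0 ?if_same //; have := deg2 w; lia.
  rewrite sum_nat_const (_ : #|_| = #|[set f in induced_embs e (@path_rel n.+1) | f ord0 == w]|).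
    by rewrite card_path_embs_from // mem_path_components_endpoint //; case: ifP; rewrite ?mul1n.
  by apply: eq_card => f; rewrite unfold_in !inE.
rewrite (sum_path_embs_rev _ _ (fun w => 2 - deg e w)).
rewrite (partition_big (fun f : {ffun 'I_n.+1 -> T} => f ord0) predT) //=.
rewrite (eq_bigr _ (fun w _ => fiber w)) -big_mkcond.
rewrite (partition_big (component e) (mem Spc)) //= mulnC -sum_nat_const.
apply: eq_bigr => C Spc_C; move: (Spc_C); rewrite inE => /andP[C_comp /andP[_ iso_C]].
rewrite -[RHS](sum_path_component C_comp iso_C); apply: eq_bigl => w.
case/imsetP: C_comp => v _ C_v; rewrite C_v -/(component e v) in Spc_C *.
rewrite component_eq; case: (boolP (w \in _)) => w_in; rewrite ?andbF // andbT.
by rewrite -component_eq in w_in; rewrite (eqP w_in).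
Qed.

End PathComponents.

Lemma n_path_comps_count (T : finType) (e : rel T) n :
  symmetric e -> irreflexive e -> (forall x, deg e x <= 2) ->
  n_path_comps e n.+1 + sP e n.+2 + n.+2 * sC e n.+2 = sP e n.+1.
Proof.
move=> e_sym e_irr deg2.
have split_deg : \sum_(f in induced_embs e (@path_rel n.+1)) (2 - deg e (f ord_max)) +
    \sum_(f in induced_embs e (@path_rel n.+1)) deg e (f ord_max) =
    2 * #|induced_embs e (@path_rel n.+1)|.
  rewrite -big_split mulnC -sum_nat_const; apply: eq_bigr => f _ /=.
  by rewrite subnK.
rewrite sum_path_embs_deficit // sum_deg_path_emb_max // in split_deg.
rewrite /sP /sC; case: n split_deg => [|n].
  rewrite card_path_extensions0 // !(card_induced_embs e) card_aut_path1 card_aut_path /=.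
  lia.
rewrite card_path_extensionsS // !(card_induced_embs e) !card_aut_path card_aut_cycle /=.
lia.
Qed.

Local Open Scope ring_scope.

Theorem lemma4p2 (T : finType) (e : rel T) (k : nat) :
  symmetric e -> irreflexive e -> max_degree_eq e 2 -> (2 <= k)%N ->
  (n_path_comps e k.-1)%:Z
    = (sP e k.-1)%:Z - (sP e k)%:Z - (k%:Z * (sC e k)%:Z).
Proof.
move=> e_sym e_irr [deg2 _]; case: k => [|[|n]] // _.
by rewrite /= -(n_path_comps_count n e_sym e_irr deg2) !PoszD PoszM; ring.
Qed.
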